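(* Let $(\mathcal{A},m)$ be a multiarrangement and $H_0\in\mathcal{A}$. Then $(\mathcal{A},m+k\delta_{H_0})$ has a good summand to $H_0$ for all sufficiently large integers $k$.
   Context: Let $\mathbb{K}$ be a field, $S=\mathbb{K}[x_1,\dots,x_\ell]$. A multiarrangement $(\mathcal{A},m)$ is a finite set of linear hyperplanes $H=\ker\alpha_H$ of $\mathbb{K}^\ell$ with multiplicity $m:\mathcal{A}\to\mathbb{Z}_{>0}$. $D(\mathcal{A},m)=\{\theta\in\mathrm{Der}_{\mathbb{K}}(S):\theta(\alpha_H)\in\alpha_H^{m(H)}S\ \forall H\}$. $\delta_{H_0}$ is the function on $\mathcal{A}$ equal to $1$ at $H_0$ and $0$ elsewhere. A good summand to $H_0$ for $(\mathcal{A},m)$ is a homogeneous $\theta_0\in D(\mathcal{A},m)$ with all $\theta_0(x_i)$ zero or homogeneous of degree $m(H_0)$, and $\theta_0(\alpha_{H_0})=\alpha_{H_0}^{m(H_0)}$. *)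

From HB Require Import structures.
From mathcomp Require Import all_boot all_order all_algebra.
From mathcomp Require Import mpoly.
Set Implicit Arguments. Unset Strict Implicit. Unset Printing Implicit Defensive.
Import GRing.Theory.
Local Open Scope ring_scope.

(* S = K[x_1..x_l] is {mpoly K[l]}.  A K-derivation of S is determined by
   (and freely given by) its values on the variables: theta = sum_i theta(x_i) d/dx_i.
   We represent theta by the family of its values theta(x_i). *)
Definition der (K : fieldType) (l : nat) := 'I_l -> {mpoly K[l]}.

Definition der_app (K : fieldType) (l : nat) (theta : der K l) (f : {mpoly K[l]})
  : {mpoly K[l]} := \sum_(i < l) theta i * f^`M(i).

Definition linform (K : fieldType) (l : nat) (a : 'rV[K]_l) : {mpoly K[l]} :=
  \sum_(i < l) a 0 i *: 'X_i.

Definition is_arrangement (K : fieldType) (l n : nat) (alpha : 'I_n -> 'rV[K]_l) : Prop :=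
  (forall j, alpha j != 0) /\
  (forall i j, i != j -> forall c : K, alpha i != c *: alpha j).

Definition in_D (K : fieldType) (l n : nat) (alpha : 'I_n -> 'rV[K]_l) (m : 'I_n -> nat)
  (theta : der K l) : Prop :=
  forall j, exists q : {mpoly K[l]},
    der_app theta (linform (alpha j)) = linform (alpha j) ^+ m j * q.

Definition good_summand (K : fieldType) (l n : nat) (alpha : 'I_n -> 'rV[K]_l)
  (m : 'I_n -> nat) (H0 : 'I_n) (theta0 : der K l) : Prop :=
  in_D alpha m theta0 /\
  (forall i, theta0 i \is (m H0).-homog) /\
  der_app theta0 (linform (alpha H0)) = linform (alpha H0) ^+ m H0.

Definition add_delta (n : nat) (m : 'I_n -> nat) (H0 : 'I_n) (k : nat) : 'I_n -> nat :=
  fun j => (m j + (if j == H0 then k else 0))%N.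

From mathcomp Require Import all_boot all_order all_algebra.
From mathcomp Require Import mpoly.
From mathcomp Require Import ring.
Set Implicit Arguments. Unset Strict Implicit. Unset Printing Implicit Defensive.
Import GRing.Theory.
Local Open Scope ring_scope.

(** Write [A] for the form of [H0].  Say [(G, F)] has an approximate summand
    if some derivation [theta] kills every form of [G], maps each [B] with
    [(B, m)] in [F] into [B^m S], and sends [A] to a power [A^N] modulo the
    ideal generated by [G].  For [F] empty take [theta = 0] if [A] lies in the
    span of [G], and otherwise a constant derivation vanishing on [G] with
    [theta(A) = A].  Approximate summands [theta_1] for [(G, F)] and [theta_2]
    for [(b :: G, F)] give one for [(G, (b, m) :: F)]: with
    [theta_2(A) = A^N2 - r_2] and [r_2 = b s + r'], [r'] in the ideal of [G],
    take [A^N1 S theta_2 + (b s)^m theta_1] where [(A^N2 - r_2) S = A^(N2 m) - r_2^m];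
    the error term [r_2^m - (b s)^m] is a multiple of [r'].  Thus [([::], F)]
    has one for every [F]: some derivation maps [A] to [A^N] and each other
    form [B_j] into [B_j^(m_j) S].  Multiplying by a power of [A] and taking
    homogeneous parts of degree [m(H0) + k] gives the good summand.  Nothing
    uses that the forms define an arrangement or that multiplicities are
    positive. *)

Section HomogeneousPart.
Variables (R : comRingType) (n : nat).

Lemma pihomogMl (h q : {mpoly R[n]}) e d : h \is e.-homog ->
  pihomog mdeg (e + d) (h * q) = h * pihomog mdeg d q.
Proof.
move=> hh; rewrite {1 2}[q]mpolyE mulr_sumr !linear_sum mulr_sumr.
apply: eq_bigr => m _; rewrite -scalerAr !linearZ /= -scalerAr; congr (_ *: _).
have hXm : h * 'X_[m] \is (e + mdeg m).-homog by rewrite dhomogM // dhomogX.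
rewrite pihomogX; case: eqP => [<-|ne]; first by rewrite pihomog_dE.
by rewrite mulr0 (@pihomog_ne0 _ _ _ (e + mdeg m)) // eqn_add2l; apply/eqP.
Qed.

End HomogeneousPart.

Lemma exists_dual_cV (K : fieldType) (r l : nat) (M : 'M[K]_(r, l)) (a : 'rV[K]_l) :
  ~~ (a <= M)%MS -> exists w : 'cV[K]_l, (a *m w) 0 0 = 1 /\ M *m w = 0.
Proof.
rewrite submxE; set v := a *m cokermx M => /rV0Pn [j vj].
exists ((v 0 j)^-1 *: col j (cokermx M)); rewrite -!scalemxAr; split.
  by rewrite [col j _]colE mulmxA -colE -/v; clearbody v; rewrite !mxE mulVf.
by rewrite colE mulmxA mulmx_coker mul0mx scaler0.
Qed.

Section LinearForms.
Variables (K : fieldType) (l : nat).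
Local Notation P := {mpoly K[l]}.
Implicit Types (theta : der K l) (a : 'rV[K]_l) (p : P).

Definition der_linform theta a : P := \sum_(i < l) a 0 i *: theta i.

Lemma mderivXU (i j : 'I_l) : ('X_j : P)^`M(i) = (j == i)%:R.
Proof.
rewrite mderivX mnm1E; case: eqP => [->|_]; last by rewrite scale0r.
have -> : (U_(i) - U_(i))%MM = 0%MM by apply/mnmP => k; rewrite !mnmE subnn.
by rewrite mpolyX0 scale1r.
Qed.

Lemma der_app_linform theta a : der_app theta (linform a) = der_linform theta a.
Proof.
apply: eq_bigr => i _; rewrite /linform raddf_sum (bigD1 i) //= big1.
  by rewrite mderivZ mderivXU eqxx addr0 -scalerCA mulr1.
by move=> j /negbTE ji; rewrite mderivZ mderivXU ji scaler0.
Qed.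

Lemma der_linformMl p theta a :
  der_linform (fun i => p * theta i) a = p * der_linform theta a.
Proof. by rewrite mulr_sumr; apply: eq_bigr => i _; rewrite scalerAr. Qed.

Lemma der_linform_lincomb p1 p2 theta1 theta2 a :
  der_linform (fun i => p1 * theta1 i + p2 * theta2 i) a =
  p1 * der_linform theta1 a + p2 * der_linform theta2 a.
Proof. by rewrite -!der_linformMl -big_split; apply: eq_bigr => i _; rewrite scalerDr. Qed.

Lemma der_linform_const (w : 'cV[K]_l) p a :
  der_linform (fun i => w i 0 *: p) a = (a *m w) 0 0 *: p.
Proof.
rewrite mxE scaler_suml; apply: eq_bigr => i _; by rewrite scalerA.
Qed.

Lemma der_linform_pihomog d theta a :
  der_linform (fun i => pihomog mdeg d (theta i)) a =
  pihomog mdeg d (der_linform theta a).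
Proof. by rewrite linear_sum; apply: eq_bigr => i _; rewrite linearZ. Qed.

Lemma linform_mulmx (r : nat) (u : 'rV[K]_r) (M : 'M[K]_(r, l)) :
  linform (u *m M) = \sum_(i < r) u 0 i *: linform (row i M).
Proof.
rewrite mulmx_sum_row /linform.
under eq_bigr => j _ do rewrite summxE scaler_suml.
rewrite exchange_big /=; apply: eq_bigr => i _.
by rewrite scaler_sumr; apply: eq_bigr => j _; rewrite scalerA mxE.
Qed.

Lemma linform_homog a : linform a \is 1.-homog.
Proof.
apply: rpred_sum => i _; apply: rpredZ.
by apply/dhomogP => m; rewrite msuppX inE => /eqP ->; exact: mdeg1.
Qed.

End LinearForms.

Section LinearIdeal.
Variables (K : fieldType) (l : nat).
Local Notation P := {mpoly K[l]}.
Implicit Types (G : seq 'rV[K]_l) (r p : P).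

Definition in_lin_ideal G r :=
  exists h : 'I_(size G) -> P, r = \sum_i h i * linform G`_i.

Lemma lin_ideal0 G : in_lin_ideal G 0.
Proof. by exists (fun=> 0); rewrite big1 // => i _; rewrite mul0r. Qed.

Lemma lin_idealD G r1 r2 :
  in_lin_ideal G r1 -> in_lin_ideal G r2 -> in_lin_ideal G (r1 + r2).
Proof.
move=> [h1 ->] [h2 ->]; exists (fun i => h1 i + h2 i).
by rewrite -big_split; apply: eq_bigr => i _; rewrite mulrDl.
Qed.

Lemma lin_idealMl G p r : in_lin_ideal G r -> in_lin_ideal G (p * r).
Proof.
move=> [h ->]; exists (fun i => p * h i).
by rewrite mulr_sumr; apply: eq_bigr => i _; rewrite mulrA.
Qed.

Lemma lin_ideal_nil r : in_lin_ideal [::] r -> r = 0.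
Proof. by move=> [h ->]; rewrite big_ord0. Qed.

Lemma lin_ideal_cons b G r : in_lin_ideal (b :: G) r ->
  exists s r', in_lin_ideal G r' /\ r = linform b * s + r'.
Proof.
move=> [h ->]; exists (h ord0), (\sum_i h (lift ord0 i) * linform G`_i).
split; first by exists (fun i => h (lift ord0 i)).
by rewrite big_ord_recl /= mulrC.
Qed.

End LinearIdeal.

Section ApproxSummand.
Variables (K : fieldType) (l : nat) (a0 : 'rV[K]_l).
Local Notation P := {mpoly K[l]}.
Local Notation A := (linform a0).
Implicit Types (G : seq 'rV[K]_l) (Fs : seq ('rV[K]_l * nat)).

Definition approx_summand G Fs :=
  exists (N : nat) (theta : der K l) (r : P),
    [/\ in_lin_ideal G r, der_linform theta a0 + r = A ^+ N,
        {in G, forall g, der_linform theta g = 0} &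
        {in Fs, forall bm, exists q, der_linform theta bm.1 = linform bm.1 ^+ bm.2 * q}].

Lemma approx_summand_nil G : approx_summand G [::].
Proof.
pose M := \matrix_(i < size G) G`_i.
have [/submxP [u Eu] | a0_notin] := boolP (a0 <= M)%MS.
  exists 1%N, (fun=> 0), A; split => //.
  - exists (fun i => (u 0 i)%:MP); rewrite Eu linform_mulmx.
    by apply: eq_bigr => i _; rewrite rowK mul_mpolyC.
  - by rewrite /der_linform big1 ?add0r ?expr1 // => i _; rewrite scaler0.
  - by move=> g _; rewrite /der_linform big1 // => i _; rewrite scaler0.
have [w [a0w Mw]] := exists_dual_cV a0_notin.
exists 1%N, (fun i => w i 0 *: A), 0; split => //; first exact: lin_ideal0.
  by rewrite der_linform_const a0w scale1r addr0 expr1.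
move=> _ /(nthP 0) [k kG <-]; rewrite der_linform_const.
have -> : G`_k = row (Ordinal kG) M by rewrite rowK.
by rewrite -row_mul Mw row0 mxE scale0r.
Qed.

Lemma approx_summand_cons G Fs b m :
  approx_summand G Fs -> approx_summand (b :: G) Fs -> approx_summand G ((b, m) :: Fs).
Proof.
move=> [N1 [t1 [r1 [I1 E1 Z1 D1]]]] [N2 [t2 [r2 [I2 E2 Z2 D2]]]].
have [s [r2' [I2' Er2]]] := lin_ideal_cons I2.
set B := linform b; set X := A ^+ N2.
pose S := \sum_(i < m) X ^+ (m.-1 - i) * r2 ^+ i.
pose S' := \sum_(i < m) r2 ^+ (m.-1 - i) * (B * s) ^+ i.
have XS : (X - r2) * S = X ^+ m - r2 ^+ m by rewrite subrXX.
have r2S' : r2' * S' = r2 ^+ m - (B * s) ^+ m.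
  suff -> : r2' = r2 - B * s by rewrite subrXX.
  by rewrite Er2 [B * s + _]addrC addrK.
pose theta i := A ^+ N1 * S * t2 i + (B * s) ^+ m * t1 i.
exists (N1 + N2 * m)%N, theta, (A ^+ N1 * (r2' * S') + (B * s) ^+ m * r1); split.
- apply: lin_idealD; apply: lin_idealMl => //.
  by rewrite mulrC; apply: lin_idealMl.
- have t2a0 : der_linform t2 a0 = X - r2 by rewrite /X -E2 addrK.
  have t1a0 : der_linform t1 a0 = A ^+ N1 - r1 by rewrite -E1 addrK.
  rewrite der_linform_lincomb t2a0 t1a0 -mulrA [S * _]mulrC XS r2S'.
  by rewrite exprD exprM -/X; ring.
- move=> g gG; rewrite der_linform_lincomb Z1 // Z2 ?inE ?gG ?orbT //.
  by rewrite !mulr0 addr0.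
move=> bm; rewrite inE => /predU1P [-> | bmF] /=.
  exists (s ^+ m * der_linform t1 b).
  by rewrite der_linform_lincomb Z2 ?mem_head // mulr0 add0r exprMn mulrA.
have [q1 Eq1] := D1 bm bmF; have [q2 Eq2] := D2 bm bmF.
exists (A ^+ N1 * S * q2 + (B * s) ^+ m * q1).
by rewrite der_linform_lincomb Eq1 Eq2; ring.
Qed.

Lemma approx_summand_all Fs G : approx_summand G Fs.
Proof.
elim: Fs G => [|[b m] Fs IH] G; first exact: approx_summand_nil.
by apply: approx_summand_cons; apply: IH.
Qed.

Lemma exists_power_summand Fs : exists (N : nat) (theta : der K l),
  der_linform theta a0 = A ^+ N /\
  {in Fs, forall bm, exists q, der_linform theta bm.1 = linform bm.1 ^+ bm.2 * q}.
Proof.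
have [N [theta [r [/lin_ideal_nil -> E _ D]]]] := approx_summand_all Fs [::].
by exists N, theta; rewrite addr0 in E.
Qed.

End ApproxSummand.

Lemma good_summand_of_power (K : fieldType) (l n : nat) (alpha : 'I_n -> 'rV[K]_l)
    (m : 'I_n -> nat) (H0 : 'I_n) (theta : der K l) (N : nat) :
  der_linform theta (alpha H0) = linform (alpha H0) ^+ N ->
  (forall j, j != H0 -> exists q,
     der_linform theta (alpha j) = linform (alpha j) ^+ m j * q) ->
  (N <= m H0)%N -> (forall j, (m j <= m H0)%N) ->
  exists theta0, good_summand alpha m H0 theta0.
Proof.
set D := m H0; set A := linform (alpha H0) => thetaA Dtheta ND mD.
have powA e : linform (alpha e) ^+ m e \is (m e).-homog.
  by have := dhomogMn (m e) (linform_homog (alpha e)); rewrite mul1n.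
exists (fun i => pihomog mdeg D (A ^+ (D - N) * theta i)).
have thetaA0 : der_linform (fun i => pihomog mdeg D (A ^+ (D - N) * theta i))
    (alpha H0) = A ^+ D.
  rewrite der_linform_pihomog der_linformMl thetaA -exprD subnK //.
  exact: pihomog_dE (powA H0).
split; [move=> j | split => [i|]]; rewrite ?der_app_linform.
- have [-> | jH0] := eqVneq j H0; first by exists 1; rewrite thetaA0 mulr1.
  have [q Eq] := Dtheta j jH0.
  exists (pihomog mdeg (D - m j) (A ^+ (D - N) * q)).
  rewrite der_linform_pihomog der_linformMl Eq mulrCA -{1}(subnKC (mD j)).
  exact: pihomogMl.
- exact: pihomogP.
- exact: thetaA0.
Qed.

Theorem proposition3p5 (K : fieldType) (l n : nat) (alpha : 'I_n -> 'rV[K]_l)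
  (m : 'I_n -> nat) (H0 : 'I_n) :
  is_arrangement alpha -> (forall j, (0 < m j)%N) ->
  exists k0 : nat, forall k : nat, (k0 <= k)%N ->
    exists theta0 : der K l, good_summand alpha (add_delta m H0 k) H0 theta0.
Proof.
move=> _ _.
pose Fs := [seq (alpha j, m j) | j <- enum 'I_n & j != H0].
have [N [theta [thetaA Dtheta]]] := exists_power_summand (alpha H0) Fs.
exists (N + \sum_j m j)%N => k lek.
have mk_H0 : add_delta m H0 k H0 = (m H0 + k)%N by rewrite /add_delta eqxx.
have mk_j j : j != H0 -> add_delta m H0 k j = m j.
  by move=> /negbTE jH0; rewrite /add_delta jH0 addn0.
apply: (good_summand_of_power thetaA) => [j jH0 | |j].
- rewrite mk_j //; apply: (Dtheta (alpha j, m j)).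
  by apply: map_f; rewrite mem_filter jH0 mem_enum.
- by rewrite mk_H0 (leq_trans _ (leq_addl _ _)) // (leq_trans _ lek) ?leq_addr.
- have [-> // | jH0] := eqVneq j H0; rewrite mk_H0 mk_j //.
  rewrite (leq_trans _ (leq_addl _ _)) // (leq_trans _ lek) //.
  by rewrite (leq_trans _ (leq_addl _ _)) // (bigD1 j) //= leq_addr.
Qed.
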